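(* Let $\ell\ge5$, let $G$ be an $\ell$-holed graph, and let $(A,B,P_1,\dots,P_4)$ be a $4$-bar gate in $G$, where $P_i$ has ends $a_i\in V(A)$, $b_i\in V(B)$. Define $d(1,2,3,4)=d_A(a_1,a_2)+d_A(a_3,a_4)$, $d(1,3,2,4)=d_A(a_1,a_3)+d_A(a_2,a_4)$ and $d(1,4,2,3)=d_A(a_1,a_4)+d_A(a_2,a_3)$. Then two of $d(1,2,3,4),d(1,3,2,4),d(1,4,2,3)$ are equal and the third is at most one more.
   Context: A hole is an induced cycle of length at least four; $G$ is $\ell$-holed if all holes have length exactly $\ell$. $d_A$ denotes distance in $A$. A $4$-bar semigate in $G$ is a tuple $(A,B,P_1,\dots,P_4)$ of induced subgraphs such that: $A,B$ are vertex-disjoint connected subgraphs; each $P_i$ is a path with ends $a_i,b_i$, $V(P_i\cap A)=\{a_i\}$, $V(P_i\cap B)=\{b_i\}$; the $P_i$ are distinct and $V(P_i\cap P_j)=\{a_i,b_i\}\cap\{a_j,b_j\}$ for $i<j$; each vertex of $A$ has at most one neighbour in $V(B)$ and vice versa; and $A\cup B\cup P_1\cup\dots\cup P_4$ is induced. A semigate $(A',B',P'_1,\dots,P'_4)$ is strictly better than $(A,B,P_1,\dots,P_4)$ if $A'\subseteq A$, $B'\subseteq B$, $P_i\subseteq P'_i$ for all $i$, and $A'\ne A$ or $B'\ne B$. A $4$-bar gate is a $4$-bar semigate with no strictly better $4$-bar semigate. *)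

(* Finite simple graphs as a symmetric irreflexive relation on a finType. *)
From mathcomp Require Import all_boot.
Set Implicit Arguments. Unset Strict Implicit. Unset Printing Implicit Defensive.

Section Graphs.
Variables (T : finType) (e : rel T).

(* A hole: an induced cycle of length at least four, given by the cyclic
   sequence of its (distinct) vertices. *)
Definition is_hole (s : seq T) : Prop :=
  exists x0 : T, x0 \in s /\
  [/\ uniq s, 4 <= size s &
      forall i j, i < size s -> j < size s ->
        e (nth x0 s i) (nth x0 s j) =
          (i.+1 %% size s == j) || (j.+1 %% size s == i)].

Definition holed (l : nat) : Prop := forall s, is_hole s -> size s = l.

Definition is_path (P : {set T}) (a b : T) : Prop :=
  exists s : seq T,
    [/\ uniq (a :: s), P = [set x in a :: s], last a s = b &
        forall i j, i < j -> j < size (a :: s) ->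
          e (nth a (a :: s) i) (nth a (a :: s) j) = (j == i.+1)].

Definition rel_in (A : {set T}) : rel T :=
  [rel u v | [&& u \in A, v \in A & e u v]].

Definition connected_in (A : {set T}) : Prop :=
  A != set0 /\ {in A &, forall x y, connect (rel_in A) x y}.

(* d_A(x,y): least n such that there is a walk of length n from x to y in G[A]
   (defaults to #|T| if none exists; irrelevant when G[A] is connected). *)
Definition dist_in (A : {set T}) (x y : T) : nat :=
  find (fun n => [exists t : n.-tuple T, path (rel_in A) x t && (last x t == y)])
       (iota 0 #|T|).

Definition semigate (A B : {set T}) (P : 'I_4 -> {set T}) (a b : 'I_4 -> T) : Prop :=
  [/\ [disjoint A & B], connected_in A, connected_in B,
      (forall i, is_path (P i) (a i) (b i) /\
                 P i :&: A = [set a i] /\ P i :&: B = [set b i]) &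
      (forall i j, i != j -> P i != P j /\
                 P i :&: P j = [set a i; b i] :&: [set a j; b j])] /\
  [/\
      (forall x, x \in A -> #|[set y in B | e x y]| <= 1),
      (forall y, y \in B -> #|[set x in A | e y x]| <= 1) &
      (let U := A :|: B :|: \bigcup_i P i in
       forall u v, u \in U -> v \in U -> e u v ->
         [\/ u \in A /\ v \in A, u \in B /\ v \in B |
             exists i, u \in P i /\ v \in P i])].

Definition is_semigate (A B : {set T}) (P : 'I_4 -> {set T}) : Prop :=
  exists a b, semigate A B P a b.

Definition strictly_better (A' B' : {set T}) (P' : 'I_4 -> {set T})
    (A B : {set T}) (P : 'I_4 -> {set T}) : Prop :=
  [/\ A' \subset A, B' \subset B, (forall i, P i \subset P' i) &
      (A' != A \/ B' != B)].

Definition gate (A B : {set T}) (P : 'I_4 -> {set T}) (a b : 'I_4 -> T) : Prop :=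
  semigate A B P a b /\
  ~ (exists A' B' P', is_semigate A' B' P' /\ strictly_better A' B' P' A B P).

End Graphs.

Definition o1 : 'I_4 := @Ordinal 4 0 isT.
Definition o2 : 'I_4 := @Ordinal 4 1 isT.
Definition o3 : 'I_4 := @Ordinal 4 2 isT.
Definition o4 : 'I_4 := @Ordinal 4 3 isT.

From mathcomp Require Import all_boot zify.
Set Implicit Arguments. Unset Strict Implicit. Unset Printing Implicit Defensive.

(* Minimality of the gate makes A an inclusion-minimal connected set containing
   a_1, ..., a_4 (shrinking A alone would give a strictly better semigate), and
   l >= 5 is only used to exclude induced 4-cycles.  The four-point condition is
   proved for all such minimal connectors by induction on their size.  If a
   vertex v separates A, some component C of A - v contains one or two
   terminals.  With two, every distance across C passes through v, so two of the
   sums coincide and dominate the third.  With one terminal x, replacing x by v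
   and deleting C gives a smaller minimal connector with the same distances, and
   all three sums shift by d(x, v).  Otherwise A is 2-connected, so each of its
   vertices is a terminal and is non-adjacent to at most one other; as there is
   no induced C4, each of the three pairings of the terminals contains an edge,
   so all distances are 1 or 2 and every sum is 2 or 3. *)

Section InducedDistance.
Variables (T : finType) (e : rel T).
Implicit Types (A : {set T}) (x y z : T) (p : seq T).

Definition induced_connected A := {in A &, forall x y, connect (rel_in e A) x y}.

Lemma rel_in_subset A A' : A \subset A' -> subrel (rel_in e A) (rel_in e A').
Proof.
by move=> /subsetP sAA' x y /and3P [xA yA exy]; rewrite /rel_in /= sAA' ?sAA'.
Qed.

Lemma connect_rel_in_subset A A' x y :
  A \subset A' -> connect (rel_in e A) x y -> connect (rel_in e A') x y.
Proof. by move=> sAA'; apply: connect_sub => u w /(rel_in_subset sAA') /connect1. Qed.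

Lemma rel_in_neighbor A x y :
  induced_connected A -> x \in A -> y \in A -> x != y -> exists u, rel_in e A x u.
Proof.
move=> hA xA yA; case/connectP: (hA x y xA yA) => -[/= _ ->|u p /= /andP [xu _] _ _].
  by rewrite eqxx.
by exists u.
Qed.

Lemma dist_in_le_path A x p : path (rel_in e A) x p -> dist_in e A x (last x p) <= size p.
Proof.
move=> hp; rewrite /dist_in; case: (ltnP (size p) #|T|) => hs.
  rewrite leqNgt; apply/negP => /(before_find 0); rewrite nth_iota // add0n.
  by move/negbT/existsPn/(_ (in_tuple p)); rewrite /= hp eqxx.
by apply: leq_trans (find_size _ _) _; rewrite size_iota.
Qed.

Lemma dist_in_le_card A x y : dist_in e A x y <= #|T|.
Proof. by rewrite /dist_in; apply: leq_trans (find_size _ _) _; rewrite size_iota. Qed.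

Lemma dist_in_path A x y : dist_in e A x y < #|T| ->
  exists p, [/\ path (rel_in e A) x p, last x p = y & size p = dist_in e A x y].
Proof.
rewrite /dist_in => hlt; have hhas : has (fun n => [exists t : n.-tuple T,
  path (rel_in e A) x t && (last x t == y)]) (iota 0 #|T|) by rewrite has_find size_iota.
move: (nth_find 0 hhas); rewrite nth_iota // add0n => /existsP [t /andP [hp /eqP hl]].
by exists t; rewrite size_tuple.
Qed.

Lemma connect_dist_in_lt A x y : connect (rel_in e A) x y -> dist_in e A x y < #|T|.
Proof.
case/connectP=> p hp ->; case: (shortenP hp) => q hq uq _.
apply: leq_ltn_trans (dist_in_le_path hq) _.
apply: (@leq_trans (size (x :: q))) => //.
by rewrite -(card_uniqP uq) max_card.
Qed.

Lemma dist_in_triangle A x y z : dist_in e A x z <= dist_in e A x y + dist_in e A y z.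
Proof.
case: (ltnP (dist_in e A x y) #|T|) => [hxy|]; last first.
  by move/(leq_trans (dist_in_le_card A x z))/leq_trans; apply; apply: leq_addr.
case: (ltnP (dist_in e A y z) #|T|) => [hyz|]; last first.
  by move/(leq_trans (dist_in_le_card A x z))/leq_trans; apply; apply: leq_addl.
have [p [hp lp <-]] := dist_in_path hxy; have [q [hq lq <-]] := dist_in_path hyz.
rewrite -size_cat -lq -lp -last_cat; apply: dist_in_le_path.
by rewrite cat_path hp lp.
Qed.

Lemma dist_in_xx A x : dist_in e A x x = 0.
Proof. by apply/eqP; rewrite -leqn0; apply: (@dist_in_le_path A x [::]). Qed.

Lemma dist_in_subset A A' x y : A \subset A' -> dist_in e A' x y <= dist_in e A x y.
Proof.
move=> sAA'; case: (ltnP (dist_in e A x y) #|T|) => [hxy|]; last first.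
  exact: leq_trans (dist_in_le_card _ _ _).
have [p [hp <- <-]] := dist_in_path hxy.
by apply: dist_in_le_path; apply: sub_path hp; apply: rel_in_subset.
Qed.

Lemma dist_in_adjacent A x y : x != y -> rel_in e A x y -> dist_in e A x y = 1.
Proof.
move=> nxy hxy; apply/eqP; rewrite eqn_leq (@dist_in_le_path A x [:: y]) /= ?hxy //.
rewrite lt0n; apply: contra nxy => /eqP d0.
have [p [_ lp]] := dist_in_path (connect_dist_in_lt (connect1 hxy)).
by rewrite d0 => /size0nil p0; rewrite -lp p0.
Qed.

Lemma dist_in_common_neighbor A x y z :
  x != y -> ~~ e x y -> rel_in e A x z -> rel_in e A z y -> dist_in e A x y = 2.
Proof.
move=> nxy nexy hxz hzy; apply/eqP; rewrite eqn_leq (@dist_in_le_path A x [:: z; y]) /=.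
  rewrite ltnNge; apply/negP => hle.
  have hc : connect (rel_in e A) x y := connect_trans (connect1 hxz) (connect1 hzy).
  have [[|u [|w p]] [/= hp hl hs]] := dist_in_path (connect_dist_in_lt hc).
  - by rewrite hl eqxx in nxy.
  - by move: hp; rewrite hl andbT => /and3P [_ _ exy]; rewrite exy in nexy.
  - by rewrite -hs in hle.
by rewrite hxz hzy.
Qed.

Definition rel_in_or_eq A := [rel x y | (x == y) || rel_in e A x y].

Lemma dist_in_le_path_or_eq A x p :
  path (rel_in_or_eq A) x p -> dist_in e A x (last x p) <= size p.
Proof.
elim: p x => [|y p IHp] x /=; first by rewrite dist_in_xx.
case/andP=> /orP [/eqP <-|hxy] hp; first exact: leq_trans (IHp x hp) _.
apply: leq_trans (dist_in_triangle A x y _) _; rewrite -add1n leq_add ?IHp //.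
by rewrite (@dist_in_le_path A x [:: y]) /= ?hxy.
Qed.

Lemma connect_path_or_eq A x p :
  path (rel_in_or_eq A) x p -> connect (rel_in e A) x (last x p).
Proof.
elim: p x => [|y p IHp] x /=; first by rewrite connect0.
case/andP=> /orP [/eqP <-|hxy] hp; first exact: IHp.
exact: connect_trans (connect1 hxy) (IHp y hp).
Qed.

Hypothesis e_sym : symmetric e.

Lemma rel_in_sym A : symmetric (rel_in e A).
Proof. by move=> x y; rewrite /rel_in /= e_sym andbCA. Qed.

Lemma dist_in_sym A x y : dist_in e A x y = dist_in e A y x.
Proof.
wlog suff: x y / dist_in e A x y <= dist_in e A y x.
  by move=> h; apply/eqP; rewrite eqn_leq !h.
case: (ltnP (dist_in e A y x) #|T|) => [hyx|]; last exact: leq_trans (dist_in_le_card _ _ _).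
have [p [hp lp <-]] := dist_in_path hyx.
have last_rev : last (last y p) (rev (belast y p)) = y.
  by case: p {hp lp} => //= z p; rewrite rev_cons last_rcons.
rewrite -(size_belast y p) -size_rev -{1}lp -{2}last_rev.
by apply: dist_in_le_path; rewrite rev_path; apply: sub_path hp => a b /=; rewrite rel_in_sym.
Qed.

End InducedDistance.

Lemma exit_edge (T : Type) (r : rel T) (P : pred T) x p :
  path r x p -> P x -> ~~ P (last x p) -> exists z w, [/\ P z, ~~ P w & r z w].
Proof.
elim: p x => [|y p IHp] x /=; first by move=> _ ->.
case/andP=> rxy hp Px; case: (boolP (P y)) => [Py|nPy]; first exact: IHp.
by move=> _; exists x, y.
Qed.

Section Branches.
Variables (T : finType) (e : rel T).
Hypothesis e_sym : symmetric e.
Implicit Types (A C : {set T}) (v x y z : T).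

Definition component A x := [set y in A | connect (rel_in e A) x y].

Lemma mem_component A x : x \in A -> x \in component A x.
Proof. by move=> xA; rewrite inE xA connect0. Qed.

Lemma component_closed A x y z :
  y \in component A x -> z \in A -> e y z -> z \in component A x.
Proof.
rewrite !inE => /andP [yA cxy] zA eyz.
by rewrite zA (connect_trans cxy) // connect1 // /rel_in /= yA zA.
Qed.

Lemma component_connected A x : induced_connected e (component A x).
Proof.
have symA := sym_connect_sym (rel_in_sym e_sym A).
move=> y z yC zC; have: connect (rel_in e A) y z.
  by move: yC zC; rewrite !inE => /andP [_ cxy] /andP [_]; apply: connect_trans; rewrite symA.
case/connectP=> p hp ->; apply/connectP; exists p => //.
elim: p y yC hp {zC} => //= w p IHp y yC /andP [/and3P [_ wA eyw] hp].
have wC := component_closed yC wA eyw.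
by rewrite (IHp w wC hp) andbT /rel_in /= yC wC.
Qed.

Lemma component_disjoint A y z :
  z \in A -> z \notin component A y -> [disjoint component A y & component A z].
Proof.
move=> zA; apply: contraR => /pred0Pn [u /andP [/=]].
rewrite !inE => /andP [_ cyu] /andP [_ czu].
by rewrite zA (connect_trans cyu) // (sym_connect_sym (rel_in_sym e_sym A)).
Qed.

Definition branch A v C := [/\ C \subset A :\ v, induced_connected e C &
  forall z w, z \in C -> w \in A :\ v -> e z w -> w \in C].

Lemma component_branch A v x : branch A v (component (A :\ v) x).
Proof.
split; [apply/subsetP => y; rewrite inE => /andP [] // | exact: component_connected |].
by move=> z w; apply: component_closed.
Qed.

Section BranchFacts.
Variables (A : {set T}) (v : T) (C : {set T}).
Hypothesis hC : branch A v C.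

Lemma branch_sub : C \subset A.
Proof. by case: hC => /subset_trans-> //; apply: subsetDl. Qed.

Lemma branch_notin : v \notin C.
Proof. by case: hC => /subsetP sC _ _; apply/negP => /sC; rewrite !inE eqxx. Qed.

Lemma branch_step z w : z \in C -> w \in A -> e z w -> (w \in C) || (w == v).
Proof.
case: hC => _ _ cl zC wA ezw; case: (eqVneq w v) => [_|wv]; first by rewrite orbT.
by rewrite (cl z) // !inE wv.
Qed.

Lemma branch_exit x p : path (rel_in e A) x p -> x \in C -> last x p \notin C -> v \in p.
Proof.
elim: p x => [|y p IHp] x /=; first by move=> _ ->.
case/andP=> /and3P [_ yA exy] hp xC hl; rewrite inE.
by case/orP: (branch_step xC yA exy) => [yC|/eqP->]; rewrite ?eqxx // (IHp y) ?orbT.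
Qed.

Lemma dist_in_branch x y : x \in C -> y \notin C -> connect (rel_in e A) x y ->
  dist_in e A x y = dist_in e A x v + dist_in e A v y.
Proof.
move=> xC yC /connect_dist_in_lt /dist_in_path [p [hp lp sp]].
apply/eqP; rewrite eqn_leq dist_in_triangle -sp /=.
have vp : v \in p by apply: (branch_exit hp xC); rewrite lp.
move: hp lp; case/path.splitP: vp => p1 p2; rewrite cat_path last_cat last_rcons size_cat.
case/andP=> hp1 hp2 lp2; apply: leq_add.
  by have := dist_in_le_path hp1; rewrite last_rcons.
by rewrite -lp2; apply: dist_in_le_path.
Qed.

(* Collapsing C onto v turns walks in A into walks in A :\: C that may
   pause, without changing their length. *)
Let collapse z := if z \in C then v else z.

Lemma path_collapse x p : x \in A -> path (rel_in e A) x p ->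
  path (rel_in_or_eq e (A :\: C)) (collapse x) (map collapse p).
Proof.
elim: p x => [|y p IHp] x //= xA /andP [/and3P [_ yA exy] hp].
rewrite (IHp y yA hp) andbT /collapse.
case: (boolP (x \in C)) => xC; case: (boolP (y \in C)) => yC /=; rewrite ?eqxx //.
- by case/orP: (branch_step xC yA exy) => [/(negP yC)//|/eqP->]; rewrite eqxx.
- rewrite e_sym in exy.
  by case/orP: (branch_step yC xA exy) => [/(negP xC)//|/eqP->]; rewrite eqxx.
- by rewrite /rel_in /= !inE xC yC xA yA exy orbT.
Qed.

Lemma induced_connected_setD : induced_connected e A -> induced_connected e (A :\: C).
Proof.
move=> hA x y; rewrite !inE => /andP [xC xA] /andP [yC yA].
case/connectP: (hA x y xA yA) => p hp ly.
have := connect_path_or_eq (path_collapse xA hp).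
by rewrite last_map -ly /collapse (negbTE xC) (negbTE yC).
Qed.

Lemma dist_in_setD x y : x \in A :\: C -> y \in A :\: C -> connect (rel_in e A) x y ->
  dist_in e (A :\: C) x y = dist_in e A x y.
Proof.
move=> xAC yAC /connect_dist_in_lt /dist_in_path [p [hp lp sp]].
apply/eqP; rewrite eqn_leq (dist_in_subset _ _ _ (subsetDl A C)) andbT.
move: xAC yAC; rewrite !inE => /andP [xC xA] /andP [yC yA].
have := dist_in_le_path_or_eq (path_collapse xA hp).
by rewrite last_map lp size_map sp /collapse (negbTE xC) (negbTE yC).
Qed.

Lemma branch_attached x : induced_connected e A -> v \in A -> x \in C ->
  exists2 z, z \in C & e z v.
Proof.
move=> hA vA xC; have xA := subsetP branch_sub x xC.
case/connectP: (hA x v xA vA) => p hp lp.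
have [z [w [zC wC /and3P [_ wA ezw]]]] : exists z w, [/\ z \in C, w \notin C & rel_in e A z w].
  by apply: (@exit_edge _ _ (mem C) _ _ hp xC); rewrite -lp branch_notin.
exists z => //; case/orP: (branch_step zC wA ezw) => [wC'|/eqP <- //].
by rewrite wC' in wC.
Qed.

End BranchFacts.
End Branches.

Section MinimalConnectors.
Variables (T : finType) (e : rel T).
Hypothesis e_sym : symmetric e.
Implicit Types (A C D : {set T}) (s : seq T) (v x y z : T).

Definition minimal_connector A s := [/\ {subset s <= A}, induced_connected e A &
  forall A', A' \subset A -> {subset s <= A'} -> induced_connected e A' -> A' = A].

Lemma minimal_connector_perm A s s' :
  s =i s' -> minimal_connector A s -> minimal_connector A s'.
Proof.
move=> ss' [sA hA hmin]; split=> // [t|A' sA' s'A' hA']; first by rewrite -ss'; apply: sA.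
by apply: hmin => // t; rewrite ss'; apply: s'A'.
Qed.

Lemma minimal_connector_setD A s D : minimal_connector A s ->
  {subset s <= A :\: D} -> induced_connected e (A :\: D) -> [disjoint D & A].
Proof.
case=> _ _ hmin sAD hAD; have eAD := hmin _ (subsetDl A D) sAD hAD.
by rewrite -eAD disjoint_subset; apply/subsetP => u uD; rewrite !inE uD.
Qed.

Lemma minimal_connector_branch A s s' v C x : minimal_connector A s -> v \in A ->
  branch e A v C -> x \in C -> (forall t, t \in s -> t \notin C -> t \in s') ->
  {subset s' <= A :\: C} -> v \in s' -> minimal_connector (A :\: C) s'.
Proof.
move=> [sA hA hmin] vA hC xC ss' s'A vs'.
split=> //; first exact: (induced_connected_setD e_sym hC hA).
move=> A' sA' s'A' hA'; have [z zC ezv] := branch_attached hC hA vA xC.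
have [_ hCc _] := hC; have vA' := s'A' v vs'.
have toV y : y \in A' :|: C -> connect (rel_in e (A' :|: C)) y v.
  rewrite inE => /orP [yA'|yC].
    exact: connect_rel_in_subset (subsetUl _ _) (hA' y v yA' vA').
  apply: connect_trans (connect_rel_in_subset (subsetUr _ _) (hCc y z yC zC)) (connect1 _).
  by rewrite /rel_in /= !inE zC vA' ezv orbT.
have A'C : A' :|: C = A.
  apply: hmin.
  - by rewrite subUset (subset_trans sA' (subsetDl _ _)) (branch_sub hC).
  - move=> t ts; rewrite inE; case: (boolP (t \in C)) => [_|tC]; first by rewrite orbT.
    by rewrite orbF s'A' // ss'.
  - move=> y1 y2 h1 h2; apply: connect_trans (toV _ h1) _.
    by rewrite (sym_connect_sym (rel_in_sym e_sym _)); apply: toV.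
apply/eqP; rewrite eqEsubset sA' /=; apply/subsetP => y.
by rewrite inE -A'C inE => /andP [/negbTE ->]; rewrite orbF.
Qed.

Lemma branch_has_terminal A s v C x :
  minimal_connector A s -> branch e A v C -> x \in C -> has (mem C) s.
Proof.
move=> hS hC xC; apply/negPn/negP => /hasPn sC; have [sA hA _] := hS.
have sAC : {subset s <= A :\: C} by move=> t ts; rewrite inE sC ?sA.
have := disjointFr (minimal_connector_setD hS sAC (induced_connected_setD e_sym hC hA)) xC.
by rewrite (subsetP (branch_sub hC)).
Qed.

Lemma exists_small_branch A s v y z : minimal_connector A s -> size s <= 4 ->
  y \in A :\ v -> z \in A :\ v -> ~~ connect (rel_in e (A :\ v)) y z ->
  exists C, branch e A v C /\ 0 < count (mem C) s <= 2.
Proof.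
move=> hS s4 yAv zAv nyz.
pose Cy := component e (A :\ v) y; pose Cz := component e (A :\ v) z.
have hy : branch e A v Cy := component_branch e_sym A v y.
have hz : branch e A v Cz := component_branch e_sym A v z.
have disj : [disjoint Cy & Cz].
  by apply: (component_disjoint e_sym zAv); rewrite inE negb_and nyz orbT.
have cy : 0 < count (mem Cy) s.
  by rewrite -has_count (branch_has_terminal hS hy (mem_component e yAv)).
have cz : 0 < count (mem Cz) s.
  by rewrite -has_count (branch_has_terminal hS hz (mem_component e zAv)).
have : count (mem Cy) s + count (mem Cz) s <= 4.
  rewrite -count_predUI (@eq_count _ (predI _ _) pred0) ?count_pred0 ?addn0.
    exact: leq_trans (count_size _ _) s4.
  by move=> u /=; case uy: (u \in Cy) => //=; apply: disjointFr disj uy.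
case: (leqP (count (mem Cy) s) 2) => hcy hsum; [exists Cy | exists Cz]; split => //.
  by rewrite cy.
by rewrite cz /=; lia.
Qed.

End MinimalConnectors.

Definition four_point (s1 s2 s3 : nat) :=
  (s1 = s2 /\ s3 <= s1 + 1) \/ (s1 = s3 /\ s2 <= s1 + 1) \/ (s2 = s3 /\ s1 <= s2 + 1).

Lemma four_point_adjacency (b12 b34 b13 b24 b14 b23 : bool) :
  b12 || b34 -> b13 || b24 -> b14 || b23 ->
  four_point (2 - b12 + (2 - b34)) (2 - b13 + (2 - b24)) (2 - b14 + (2 - b23)).
Proof.
by case: b12 b34 b13 b24 b14 b23 => [] [] [] [] [] [] //= _ _ _; rewrite /four_point; lia.
Qed.

Lemma four_point_shift k s1 s2 s3 :
  four_point s1 s2 s3 -> four_point (k + s1) (k + s2) (k + s3).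
Proof. rewrite /four_point; lia. Qed.

Section FourPoint.
Variables (T : finType) (e : rel T).
Hypothesis e_sym : symmetric e.
Variable A : {set T}.
Implicit Types x y z : T.

Definition four_point_in x1 x2 x3 x4 :=
  four_point (dist_in e A x1 x2 + dist_in e A x3 x4) (dist_in e A x1 x3 + dist_in e A x2 x4)
             (dist_in e A x1 x4 + dist_in e A x2 x3).

Lemma four_point_in_swap12 x1 x2 x3 x4 : four_point_in x2 x1 x3 x4 -> four_point_in x1 x2 x3 x4.
Proof. by rewrite /four_point_in /four_point (dist_in_sym e_sym A x2 x1); lia. Qed.

Lemma four_point_in_swap23 x1 x2 x3 x4 : four_point_in x1 x3 x2 x4 -> four_point_in x1 x2 x3 x4.
Proof. by rewrite /four_point_in /four_point (dist_in_sym e_sym A x3 x2); lia. Qed.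

Lemma four_point_in_swap34 x1 x2 x3 x4 : four_point_in x1 x2 x4 x3 -> four_point_in x1 x2 x3 x4.
Proof. by rewrite /four_point_in /four_point (dist_in_sym e_sym A x4 x3); lia. Qed.

Lemma four_point_in_xx x y z : four_point_in x x y z.
Proof.
rewrite /four_point_in /four_point dist_in_xx.
have := dist_in_triangle e A y x z; rewrite (dist_in_sym e_sym A y x); lia.
Qed.

Lemma four_point_in_degenerate x1 x2 x3 x4 :
  ~~ uniq [:: x1; x2; x3; x4] -> four_point_in x1 x2 x3 x4.
Proof.
case: (eqVneq x1 x2) => [<- _|n12]; first exact: four_point_in_xx.
case: (eqVneq x1 x3) => [<- _|n13].
  exact/four_point_in_swap23/four_point_in_xx.
case: (eqVneq x1 x4) => [<- _|n14].
  exact/four_point_in_swap34/four_point_in_swap23/four_point_in_xx.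
case: (eqVneq x2 x3) => [<- _|n23].
  exact/four_point_in_swap12/four_point_in_swap23/four_point_in_xx.
case: (eqVneq x2 x4) => [<- _|n24].
  exact/four_point_in_swap12/four_point_in_swap34/four_point_in_swap23/four_point_in_xx.
case: (eqVneq x3 x4) => [<- _|n34].
  apply/four_point_in_swap23/four_point_in_swap12/four_point_in_swap34/four_point_in_swap23.
  exact: four_point_in_xx.
by rewrite /= !inE !negb_or n12 n13 n14 n23 n24 n34.
Qed.

End FourPoint.

Section InducedC4.
Variables (T : finType) (e : rel T).
Hypotheses (e_sym : symmetric e) (e_irr : irreflexive e).

Definition induced_C4 (x y z w : T) :=
  [&& x != z, y != w, e x y, e y z, e z w, e w x, ~~ e x z & ~~ e y w].

Lemma induced_C4_hole x y z w : induced_C4 x y z w -> is_hole e [:: x; y; z; w].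
Proof.
case/and5P=> nxz nyw exy eyz /and4P [ezw ewx nexz neyw].
have ne u v : e u v -> u != v by apply: contraTneq => ->; rewrite e_irr.
have nxw : x != w by rewrite eq_sym (ne w x).
exists x; split; first by rewrite inE eqxx.
split=> //; first by rewrite /= !inE !negb_or nxz nyw nxw (ne x y) // (ne y z) // (ne z w).
have [eyx ezy ewz exw] : [/\ e y x, e z y, e w z & e x w] by split; rewrite e_sym.
have [nezx newy] : ~~ e z x /\ ~~ e w y by split; rewrite e_sym.
move=> [|[|[|[|i]]]] [|[|[|[|j]]]] //= _ _;
  by rewrite ?e_irr ?exy ?eyz ?ezw ?ewx ?eyx ?ezy ?ewz ?exw
     ?(negbTE nexz) ?(negbTE neyw) ?(negbTE nezx) ?(negbTE newy).
Qed.

End InducedC4.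

Lemma exists_notin_seq (T : finType) (A : {set T}) (s : seq T) :
  size s < #|A| -> exists2 w, w \in A & w \notin s.
Proof.
move=> hs; case: (boolP (A \subset s)) => [/subset_leq_card hAs|/subsetPn [w]]; last by exists w.
by have := leq_trans hAs (card_size s); rewrite leqNgt hs.
Qed.

Section Biconnected.
Variables (T : finType) (e : rel T).
Hypotheses (e_sym : symmetric e) (e_irr : irreflexive e).
Hypothesis noC4 : forall x y z w : T, ~~ induced_C4 e x y z w.
Variable A : {set T}.
Hypotheses (A4 : #|A| = 4) (A2 : forall w, w \in A -> induced_connected e (A :\ w)).

Lemma adjacent_to_one_of a b c : a \in A -> b \in A -> c \in A ->
  a != b -> a != c -> b != c -> e a b || e a c.
Proof.
move=> aA bA cA nab nac nbc.
have [w wA] : exists2 w, w \in A & w \notin [:: a; b; c] by apply: exists_notin_seq; rewrite A4.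
rewrite !inE !negb_or => /and3P [nwa nwb nwc].
have A_abcw : {subset A <= [:: a; b; c; w]}.
  have uabcw : uniq [:: a; b; c; w].
    by rewrite /= !inE !negb_or nab nac nbc !(eq_sym _ w) nwa nwb nwc.
  suff /subset_cardP eqA : #|[:: a; b; c; w]| = #|A|.
    by move=> u; rewrite -(eqA _) //; apply/subsetP => t; rewrite !inE => /or4P [] /eqP ->.
  by rewrite (card_uniqP uabcw) A4.
have [u /and3P [_ uAw eau]] : exists u, rel_in e (A :\ w) a u.
  by apply: (rel_in_neighbor (A2 wA) _ _ nab); rewrite !inE ?aA ?bA eq_sym ?nwa ?nwb.
move: uAw; rewrite !inE => /andP [nuw /A_abcw]; rewrite !inE.
by case/or4P=> /eqP eu; move: eau nuw; rewrite eu ?e_irr ?eqxx //= => ->; rewrite ?orbT.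
Qed.

Lemma dist_in_diameter2 a b : a \in A -> b \in A -> a != b -> dist_in e A a b = 2 - e a b.
Proof.
move=> aA bA nab; case: (boolP (e a b)) => eab.
  by rewrite (dist_in_adjacent nab) // /rel_in /= aA bA.
have [c cA] : exists2 c, c \in A & c \notin [:: a; b] by apply: exists_notin_seq; rewrite A4.
rewrite !inE !negb_or => /andP [nca ncb].
have [nac nbc nba] : [/\ a != c, b != c & b != a] by split; rewrite eq_sym.
have eac : e a c by move: (adjacent_to_one_of aA bA cA nab nac nbc); rewrite (negbTE eab).
have ebc : e b c by move: (adjacent_to_one_of bA aA cA nba nbc nac); rewrite e_sym (negbTE eab).
rewrite (dist_in_common_neighbor (z := c)) //; first by rewrite /rel_in /= aA cA.
by rewrite /rel_in /= bA cA e_sym.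
Qed.

Lemma pairing_has_edge a b c d : a \in A -> b \in A -> c \in A -> d \in A ->
  uniq [:: a; b; c; d] -> e a b || e c d.
Proof.
move=> aA bA cA dA; rewrite /= !inE !negb_or -!andbA.
case/and5P=> nab nac nad nbc /and3P [nbd ncd _]; apply/norP => -[eab ecd].
have nba : b != a by rewrite eq_sym.
have eac : e a c by move: (adjacent_to_one_of aA bA cA nab nac nbc); rewrite (negbTE eab).
have ead : e a d by move: (adjacent_to_one_of aA bA dA nab nad nbd); rewrite (negbTE eab).
have ebc : e b c by move: (adjacent_to_one_of bA aA cA nba nbc nac); rewrite e_sym (negbTE eab).
have ebd : e b d by move: (adjacent_to_one_of bA aA dA nba nbd nad); rewrite e_sym (negbTE eab).
apply: (negP (noC4 a c b d)).
by rewrite /induced_C4 nab ncd eac (e_sym c) ebc ebd (e_sym d) ead eab ecd.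
Qed.

End Biconnected.

Section Induction.
Variables (T : finType) (e : rel T).
Hypotheses (e_sym : symmetric e) (e_irr : irreflexive e).
Hypothesis noC4 : forall x y z w : T, ~~ induced_C4 e x y z w.
Implicit Types (A C : {set T}) (v x y z : T).

Definition connector_four_point A x1 x2 x3 x4 :=
  minimal_connector e A [:: x1; x2; x3; x4] -> four_point_in e A x1 x2 x3 x4.

Lemma connector_four_point_swap12 A x1 x2 x3 x4 :
  connector_four_point A x2 x1 x3 x4 -> connector_four_point A x1 x2 x3 x4.
Proof.
move=> h hS; apply/(four_point_in_swap12 e_sym)/h; apply: minimal_connector_perm hS.
by move=> u; rewrite !inE; do !case: (_ == _).
Qed.

Lemma connector_four_point_swap23 A x1 x2 x3 x4 :
  connector_four_point A x1 x3 x2 x4 -> connector_four_point A x1 x2 x3 x4.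
Proof.
move=> h hS; apply/(four_point_in_swap23 e_sym)/h; apply: minimal_connector_perm hS.
by move=> u; rewrite !inE; do !case: (_ == _).
Qed.

Lemma connector_four_point_swap34 A x1 x2 x3 x4 :
  connector_four_point A x1 x2 x4 x3 -> connector_four_point A x1 x2 x3 x4.
Proof.
move=> h hS; apply/(four_point_in_swap34 e_sym)/h; apply: minimal_connector_perm hS.
by move=> u; rewrite !inE; do !case: (_ == _).
Qed.

Lemma terminals_in A x1 x2 x3 x4 : minimal_connector e A [:: x1; x2; x3; x4] ->
  [/\ x1 \in A, x2 \in A, x3 \in A & x4 \in A].
Proof. by case=> sA _ _; split; apply: sA; rewrite !inE eqxx ?orbT. Qed.

Lemma connector_four_point_biconnected A x1 x2 x3 x4 :
  (forall w, w \in A -> induced_connected e (A :\ w)) -> connector_four_point A x1 x2 x3 x4.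
Proof.
move=> A2 hS; have [a1 a2 a3 a4] := terminals_in hS.
case: (boolP (uniq [:: x1; x2; x3; x4])) => [hu|]; last exact: four_point_in_degenerate.
have A_S : {subset A <= [:: x1; x2; x3; x4]}.
  move=> w wA; apply/negPn/negP => ws; have [sA _ _] := hS.
  have sAw : {subset [:: x1; x2; x3; x4] <= A :\ w}.
    by move=> t ts; rewrite !inE sA // andbT; apply: contraNneq ws => <-.
  by move: (disjointFr (minimal_connector_setD hS sAw (A2 w wA)) (set11 w)); rewrite wA.
have A4 : #|A| = 4.
  rewrite -[4]/(size [:: x1; x2; x3; x4]) -(card_uniqP hu).
  by apply: eq_card => u; apply/idP/idP => [/A_S //|]; case: hS => sA _ _; apply: sA.
have := hu; rewrite /= !inE !negb_or -!andbA.
case/and5P=> n12 n13 n14 n23 /and3P [n24 n34 _].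
have D := dist_in_diameter2 e_sym e_irr A4 A2.
rewrite /four_point_in (D x1 x2) // (D x3 x4) // (D x1 x3) // (D x2 x4) //.
rewrite (D x1 x4) // (D x2 x3) //.
apply: four_point_adjacency; apply: (pairing_has_edge e_sym e_irr noC4 A4 A2) => //.
  by rewrite /= !inE !negb_or n12 n13 n14 (eq_sym x3 x2) n23 n24 n34.
by rewrite /= !inE !negb_or n12 n13 n14 (eq_sym x4 x2) (eq_sym x4 x3) n23 n24 n34.
Qed.

Lemma connector_four_point_split A v C x1 x2 x3 x4 : branch e A v C ->
  x1 \in C -> x2 \in C -> x3 \notin C -> x4 \notin C -> connector_four_point A x1 x2 x3 x4.
Proof.
move=> hC c1 c2 c3 c4 hS; have [a1 a2 a3 a4] := terminals_in hS; have [_ hA _] := hS.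
have D a b : a \in C -> b \notin C -> b \in A ->
    dist_in e A a b = dist_in e A a v + dist_in e A v b.
  move=> aC bC bA; apply: (dist_in_branch hC) => //.
  by apply: hA => //; apply: (subsetP (branch_sub hC)).
rewrite /four_point_in /four_point (D x1 x3) // (D x2 x4) // (D x1 x4) // (D x2 x3) //.
have := dist_in_triangle e A x1 v x2; have := dist_in_triangle e A x3 v x4.
have := dist_in_sym e_sym A v x2; have := dist_in_sym e_sym A x3 v; lia.
Qed.

Section Step.
Variable A : {set T}.
Hypothesis IH : forall A' x1 x2 x3 x4, #|A'| < #|A| -> connector_four_point A' x1 x2 x3 x4.

Lemma connector_four_point_pendant v C x y1 y2 y3 : v \in A -> branch e A v C ->
  x \in C -> y1 \notin C -> y2 \notin C -> y3 \notin C -> connector_four_point A x y1 y2 y3.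
Proof.
move=> vA hC xC c1 c2 c3 hS; have [_ a1 a2 a3] := terminals_in hS; have [_ hA _] := hS.
have xA := subsetP (branch_sub hC) x xC.
have [d0 d1 d2 d3] : [/\ v \in A :\: C, y1 \in A :\: C, y2 \in A :\: C & y3 \in A :\: C].
  by rewrite !inE (branch_notin hC) c1 c2 c3 vA a1 a2 a3.
have hS' : minimal_connector e (A :\: C) [:: v; y1; y2; y3].
  apply: (minimal_connector_branch e_sym hS vA hC xC).
  - move=> t; rewrite !inE => /or4P [] /eqP -> tC; rewrite ?eqxx ?orbT //.
    by rewrite xC in tC.
  - by move=> t; rewrite !inE => /or4P [] /eqP ->; rewrite -in_setD.
  - by rewrite inE eqxx.
have ltA : #|A :\: C| < #|A|.
  rewrite -(cardsID C A) -[X in X < _]add0n ltn_add2r card_gt0.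
  by apply/set0Pn; exists x; rewrite inE xA.
have S a b : a \in A :\: C -> b \in A :\: C -> dist_in e (A :\: C) a b = dist_in e A a b.
  move=> aD bD; apply: (dist_in_setD e_sym hC) => //.
  by apply: hA; [move: aD | move: bD]; rewrite inE => /andP [].
have B b : b \in A -> b \notin C -> dist_in e A x b = dist_in e A x v + dist_in e A v b.
  by move=> bA bC; apply: (dist_in_branch hC) => //; apply: hA.
have := IH ltA hS'; rewrite /four_point_in !S //.
by rewrite (B y1) // (B y2) // (B y3) // -!addnA; apply: four_point_shift.
Qed.

Lemma connector_four_point_branch v C x1 x2 x3 x4 : v \in A -> branch e A v C ->
  0 < count (mem C) [:: x1; x2; x3; x4] <= 2 -> connector_four_point A x1 x2 x3 x4.
Proof.
move=> vA hC hc; have P := connector_four_point_pendant vA hC.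
have Sp := connector_four_point_split hC.
have S12 := @connector_four_point_swap12 A; have S23 := @connector_four_point_swap23 A.
have S34 := @connector_four_point_swap34 A.
(* In each case the terminals lying in C are first moved to the front. *)
case c1: (x1 \in C); case c2: (x2 \in C); case c3: (x3 \in C); case c4: (x4 \in C);
  rewrite /= c1 c2 c3 c4 in hc => //.
- by apply: Sp; rewrite ?c1 ?c2 ?c3 ?c4.
- by apply/S23; apply: Sp; rewrite ?c1 ?c2 ?c3 ?c4.
- by apply/S34/S23; apply: Sp; rewrite ?c1 ?c2 ?c3 ?c4.
- by apply: P; rewrite ?c1 ?c2 ?c3 ?c4.
- by apply/S12/S23; apply: Sp; rewrite ?c1 ?c2 ?c3 ?c4.
- by apply/S12/S34/S23; apply: Sp; rewrite ?c1 ?c2 ?c3 ?c4.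
- by apply/S12; apply: P; rewrite ?c1 ?c2 ?c3 ?c4.
- by apply/S23/S12/S34/S23; apply: Sp; rewrite ?c1 ?c2 ?c3 ?c4.
- by apply/S23/S12; apply: P; rewrite ?c1 ?c2 ?c3 ?c4.
- by apply/S34/S23/S12; apply: P; rewrite ?c1 ?c2 ?c3 ?c4.
Qed.

End Step.

Theorem connector_four_point_holds A x1 x2 x3 x4 : connector_four_point A x1 x2 x3 x4.
Proof.
move: {2}#|A|.+1 (ltnSn #|A|) => n; elim: n A x1 x2 x3 x4 => // n IHn A x1 x2 x3 x4 hAn.
have IH A' y1 y2 y3 y4 : #|A'| < #|A| -> connector_four_point A' y1 y2 y3 y4.
  by move=> hA'; apply: IHn; apply: leq_trans hA' _.
case: (boolP [exists v in A, exists y in A :\ v, exists z in A :\ v,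
                ~~ connect (rel_in e (A :\ v)) y z]).
  case/exists_inP=> v vA /exists_inP [y yAv /exists_inP [z zAv nyz]] hS.
  have [C [hC hcount]] := exists_small_branch e_sym hS (leqnn 4) yAv zAv nyz.
  exact: (connector_four_point_branch IH vA hC hcount hS).
move/exists_inPn=> biconn; apply: connector_four_point_biconnected => w wA y z yAw zAw.
by move: (biconn w wA) => /exists_inPn/(_ y yAw)/exists_inPn/(_ z zAw); rewrite negbK.
Qed.

End Induction.

Lemma ord4_cases (i : 'I_4) : [\/ i = o1, i = o2, i = o3 | i = o4].
Proof.
case: i => -[|[|[|[|//]]]] hi; [constructor 1 | constructor 2 | constructor 3 | constructor 4];
  exact: val_inj.
Qed.

Section Gates.
Variables (T : finType) (e : rel T).
Implicit Types (A B : {set T}) (P : 'I_4 -> {set T}) (a b : 'I_4 -> T).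

Lemma semigate_restrict A A' B P a b : semigate e A B P a b -> A' \subset A ->
  (forall i, a i \in A') -> connected_in e A' -> semigate e A' B P a b.
Proof.
move=> [[hdisj _ hBc hP hPP] [nbA nbB hU]] sA' aA' hA'.
have inU x : x \in A' :|: B :|: \bigcup_i P i -> x \in A :|: B :|: \bigcup_i P i.
  by rewrite !inE => /orP [/orP [/(subsetP sA') ->|->]|->]; rewrite ?orbT.
have toA' x : x \in A' :|: B :|: \bigcup_i P i -> x \in A -> x \in A'.
  rewrite !inE => /orP [/orP [//|xB]|/bigcupP [i _ xP]] xA.
    by rewrite (disjointFr hdisj xA) in xB.
  have [_ [hpa _]] := hP i.
  have : x \in P i :&: A by rewrite inE xP xA.
  by rewrite hpa inE => /eqP ->.
split; split=> //.
- exact: disjointWl sA' hdisj.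
- move=> i; have [hp [hpa hpb]] := hP i; do 2!split=> //.
  have aP : a i \in P i by move: (set11 (a i)); rewrite -hpa inE => /andP [].
  by apply/eqP; rewrite eqEsubset -{1}hpa setIS //= sub1set inE aP aA'.
- by move=> x /(subsetP sA'); apply: nbA.
- move=> y yB; apply: leq_trans (nbB y yB); apply: subset_leq_card.
  by apply/subsetP => x; rewrite !inE => /andP [/(subsetP sA') -> ->].
- move=> U u v hu hv huv.
  case: (hU u v (inU _ hu) (inU _ hv) huv) => [[uA vA]|[uB vB]|h].
  + by constructor 1; split; apply: toA'.
  + by constructor 2.
  + by constructor 3.
Qed.

Lemma gate_minimal_connector A B P a b :
  gate e A B P a b -> minimal_connector e A [:: a o1; a o2; a o3; a o4].
Proof.
case=> hsg hbest; have [[_ [_ hAc] _ hP _] _] := hsg.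
have aA i : a i \in A.
  by have [_ [hpa _]] := hP i; move: (set11 (a i)); rewrite -hpa inE => /andP [].
have a_s i : a i \in [:: a o1; a o2; a o3; a o4].
  by case: (ord4_cases i) => ->; rewrite !inE eqxx ?orbT.
split=> // [t|A' sA' sS hA']; first by rewrite !inE => /or4P [] /eqP ->.
apply/eqP; apply: contraT => nA'; case: hbest.
exists A', B, P; split; last by split; [exact: sA' | exact: subxx | move=> i; exact: subxx | left].
exists a, b; apply: (semigate_restrict hsg sA') => [i|]; first exact/sS/a_s.
by split=> //; apply/set0Pn; exists (a o1); exact/sS/a_s.
Qed.

End Gates.

Theorem mainTheorem7 (T : finType) (e : rel T) (l : nat)
  (e_sym : symmetric e) (e_irr : irreflexive e) (hl : 5 <= l)
  (Gholed : holed e l)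
  (A B : {set T}) (P : 'I_4 -> {set T}) (a b : 'I_4 -> T)
  (Hgate : gate e A B P a b) :
  let d1234 := dist_in e A (a o1) (a o2) + dist_in e A (a o3) (a o4) in
  let d1324 := dist_in e A (a o1) (a o3) + dist_in e A (a o2) (a o4) in
  let d1423 := dist_in e A (a o1) (a o4) + dist_in e A (a o2) (a o3) in
  [\/ d1234 = d1324 /\ d1423 <= d1234 + 1,
      d1234 = d1423 /\ d1324 <= d1234 + 1 |
      d1324 = d1423 /\ d1234 <= d1324 + 1].
Proof.
have noC4 x y z w : ~~ induced_C4 e x y z w.
  by apply/negP => /(induced_C4_hole e_sym e_irr)/Gholed l4; move: hl; rewrite -l4.
have := connector_four_point_holds e_sym e_irr noC4 (gate_minimal_connector Hgate).
by case=> [|[]] h; [apply: Or31 | apply: Or32 | apply: Or33].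
Qed.
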